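(* For the two-state-service-rate queue described in the context, assumed positive recurrent, the generating function $g$ satisfies, for all $|z|\le1$, $$u\,g(rz)=-(z-z^+)(z-z^-)\,g(z)-vz+w,$$ where $$z^\pm=\frac{1}{2\lambda}\Bigl(\mu_a+\mu_b+\lambda+\gamma\pm\sqrt{\Delta}\Bigr),\qquad \Delta=(\lambda-\gamma+\mu_a-\mu_b)^2+4\lambda\gamma,$$ and $$\lambda^2u=\lambda_a(\mu_a-\mu_b),\qquad \lambda^2v=(\lambda_a\mu_a+\lambda_b\mu_b)\pi_0,\qquad \lambda^2w=(\mu_a\mu_b+\lambda_a\mu_a+\lambda_b\mu_b+\gamma\mu_a)\pi_0.$$
   Context: Two-state-service-rate queue. Fix parameters $\lambda_a,\lambda_b>0$, $\delta>0$, $\gamma\ge0$, $\mu_a,\mu_b>0$. Set $\lambda=\lambda_a+\lambda_b$, $r=\lambda/(\lambda+\delta)$, and for $n\ge1$, $p_n=\frac{\lambda_a}{\lambda}r^n$ and $\bar p_n=1-p_n$. Consider the continuous-time Markov chain on the state space $\{0\}\cup\{(n,a),(n,b):n\ge1\}$ with the following transitions: from $0$ to $(1,a)$ at rate $\lambda_a$ and to $(1,b)$ at rate $\lambda_b$; for $n\ge1$ and $c\in\{a,b\}$, from $(n,c)$ to $(n+1,c)$ at rate $\lambda$; from $(1,c)$ to $0$ at rate $\mu_c$; for $n\ge1$ and $c\in\{a,b\}$, from $(n+1,c)$ to $(n,a)$ at rate $\mu_c p_n$ and to $(n,b)$ at rate $\mu_c\bar p_n$; for $n\ge1$, from $(n,b)$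 to $(n,a)$ at rate $\gamma$. When the chain is positive recurrent, $\pi$ denotes its stationary distribution and $\pi_0=\pi(0)$, $\pi_n^a=\pi((n,a))$, $\pi_n^b=\pi((n,b))$, $\pi_n=\pi_n^a+\pi_n^b$ for $n\ge1$. Generating functions: $g_a(z)=\sum_{n\ge1}\pi_n^az^n$, $g_b(z)=\sum_{n\ge1}\pi_n^bz^n$, $g(z)=\pi_0+g_a(z)+g_b(z)$. *)

From Stdlib Require Import Reals Lra.
Open Scope R_scope.

Definition Cplx : Type := (R * R)%type.
Definition RtoC (x : R) : Cplx := (x, 0).
Definition Cadd (z w : Cplx) : Cplx := (fst z + fst w, snd z + snd w).
Definition Cmul (z w : Cplx) : Cplx :=
  (fst z * fst w - snd z * snd w, fst z * snd w + snd z * fst w).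
Definition Copp (z : Cplx) : Cplx := (- fst z, - snd z).
Definition Csub (z w : Cplx) : Cplx := Cadd z (Copp w).
Fixpoint Cpow (z : Cplx) (n : nat) : Cplx :=
  match n with O => (1, 0) | S m => Cmul z (Cpow z m) end.
Definition Cmod (z : Cplx) : R := sqrt (fst z ^ 2 + snd z ^ 2).

Definition Cseries_sum (a : nat -> Cplx) (s : Cplx) : Prop :=
  infinite_sum (fun n => fst (a n)) (fst s) /\
  infinite_sum (fun n => snd (a n)) (snd s).

Definition rr (la lb delta : R) : R := (la + lb) / (la + lb + delta).
Definition pp (la lb delta : R) (n : nat) : R :=
  la / (la + lb) * (rr la lb delta) ^ n.

(** Global balance equations pi Q = 0 of the CTMC described in the paper,
    for the distribution given by pi0 = pi(0), pia n = pi((n,a)),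
    pib n = pi((n,b)) (n >= 1; values at index 0 of pia/pib are unused).
    Outflow rates: from 0: la+lb; from (n,a): lambda + mu_a;
    from (n,b): lambda + mu_b + gamma. *)
Definition balance (la lb delta gamma mua mub : R)
    (pi0 : R) (pia pib : nat -> R) : Prop :=
  let lam := la + lb in
  let p := pp la lb delta in
  lam * pi0 = mua * pia 1%nat + mub * pib 1%nat /\
  (forall n : nat, (1 <= n)%nat ->
     (lam + mua) * pia n =
       (if Nat.eqb n 1 then la * pi0 else lam * pia (n - 1)%nat)
       + p n * (mua * pia (S n) + mub * pib (S n))
       + gamma * pib n) /\
  (forall n : nat, (1 <= n)%nat ->
     (lam + mub + gamma) * pib n =
       (if Nat.eqb n 1 then lb * pi0 else lam * pib (n - 1)%nat)
       + (1 - p n) * (mua * pia (S n) + mub * pib (S n))).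

Definition is_prob (pi0 : R) (pia pib : nat -> R) : Prop :=
  0 <= pi0 /\ (forall n, (1 <= n)%nat -> 0 <= pia n /\ 0 <= pib n) /\
  infinite_sum (fun n => match n with O => pi0 | S _ => pia n + pib n end) 1.

Definition stationary (la lb delta gamma mua mub : R)
    (pi0 : R) (pia pib : nat -> R) : Prop :=
  is_prob pi0 pia pib /\ balance la lb delta gamma mua mub pi0 pia pib.

Definition gcoef (pi0 : R) (pia pib : nat -> R) (n : nat) : R :=
  match n with O => pi0 | S _ => pia n + pib n end.

Definition gterm (pi0 : R) (pia pib : nat -> R) (z : Cplx) (n : nat) : Cplx :=
  Cmul (RtoC (gcoef pi0 pia pib n)) (Cpow z n).

Definition Delta (la lb gamma mua mub : R) : R :=
  (la + lb - gamma + mua - mub) ^ 2 + 4 * (la + lb) * gamma.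
Definition zplus (la lb gamma mua mub : R) : R :=
  (mua + mub + (la + lb) + gamma + sqrt (Delta la lb gamma mua mub)) / (2 * (la + lb)).
Definition zminus (la lb gamma mua mub : R) : R :=
  (mua + mub + (la + lb) + gamma - sqrt (Delta la lb gamma mua mub)) / (2 * (la + lb)).
Definition uu (la lb mua mub : R) : R := la * (mua - mub) / (la + lb) ^ 2.
Definition vv (la lb mua mub pi0 : R) : R := (la * mua + lb * mub) * pi0 / (la + lb) ^ 2.
Definition ww (la lb gamma mua mub pi0 : R) : R :=
  (mua * mub + la * mua + lb * mub + gamma * mua) * pi0 / (la + lb) ^ 2.

From Pilot Require Import Defs.
From Stdlib Require Import Reals Lra Lia.
From Coquelicot Require Import Coquelicot.
(* Coquelicot also defines RtoC, Copp, ...; re-import Defs so its names take precedence. *)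
Import Pilot.Defs.
Open Scope R_scope.

(* The identity  u g(rz) = -(z - z+)(z - z-) g(z) - v z + w  is proved
   coefficientwise.  Writing c_n for the coefficients of g and L = la + lb:

   - Summing the balance equations of levels <= n gives the cut equation
     L c_n = mua pi^a_{n+1} + mub pi^b_{n+1}; hence (mua - mub) pi^a_{n+1}
     is a combination of c_n and c_{n+1}.
   - Multiplying the balance equation of state (n+1,a) by (mua - mub) and
     eliminating pi^a through the cut equation turns it into a three-term
     recurrence for the c_n, which (by Vieta, z+ + z- = (mua+mub+L+gamma)/L and
     z+ z- = (L mub + mua mub + gamma mua)/L^2) says exactly that
     u r^n c_n is the n-th coefficient of -(z^2 - (z+ + z-) z + z+ z-) g(z) - v z + w.
   - On the series side, the coefficients of such a product are computed by
     shifting the series of g, and both series converge on the closed unit disc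
     since c_n >= 0 and sum c_n = 1.  Uniqueness of limits concludes. *)

Lemma Rseries_eq a b l m : (forall n, a n = b n) -> l = m ->
  infinite_sum a l -> infinite_sum b m.
Proof.
  intros E <- H. apply is_series_Reals. apply is_series_Reals in H.
  exact (is_series_ext _ _ _ E H).
Qed.

Lemma Rseries_plus a b la lb : infinite_sum a la -> infinite_sum b lb ->
  infinite_sum (fun n => a n + b n) (la + lb).
Proof.
  intros Ha Hb. apply is_series_Reals. apply is_series_Reals in Ha, Hb.
  exact (is_series_plus _ _ _ _ Ha Hb).
Qed.

Lemma Rseries_scal k a l : infinite_sum a l -> infinite_sum (fun n => k * a n) (k * l).
Proof. intros H. apply is_series_Reals. apply is_series_Reals in H. exact (is_series_scal k _ _ H). Qed.

Lemma Rseries_shift a l : infinite_sum a l ->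
  infinite_sum (fun n => match n with O => 0 | S m => a m end) l.
Proof.
  intros H. apply is_series_Reals. apply is_series_Reals in H.
  apply is_series_decr_1. change (plus l (opp 0)) with (l + - 0).
  rewrite Ropp_0, Rplus_0_r. exact H.
Qed.

Lemma Rseries_head x : infinite_sum (fun n => match n with O => x | S _ => 0 end) x.
Proof.
  intros eps Heps. exists 0%nat. intros n _. unfold R_dist.
  replace (sum_f_R0 (fun n => match n with O => x | S _ => 0 end) n) with x.
  - rewrite Rminus_diag, Rabs_R0. exact Heps.
  - induction n as [|n IH]; simpl; [reflexivity | rewrite <- IH; ring].
Qed.

Lemma Cseries_ext a b s : (forall n, a n = b n) -> Cseries_sum a s -> Cseries_sum b s.
Proof.
  intros E [H1 H2]. split; [revert H1 | revert H2]; apply Rseries_eq; try reflexivity;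
  intros n; rewrite E; reflexivity.
Qed.

Lemma Cseries_unique a s t : Cseries_sum a s -> Cseries_sum a t -> s = t.
Proof.
  intros [H1 H2] [H3 H4]. destruct s, t; simpl in *.
  f_equal; eapply uniqueness_sum; eassumption.
Qed.

Lemma Cseries_add a b s t : Cseries_sum a s -> Cseries_sum b t ->
  Cseries_sum (fun n => Cadd (a n) (b n)) (Cadd s t).
Proof. intros [H1 H2] [H3 H4]. split; apply Rseries_plus; assumption. Qed.

Lemma Cseries_mul w a s : Cseries_sum a s ->
  Cseries_sum (fun n => Cmul w (a n)) (Cmul w s).
Proof.
  intros [H1 H2]. split.
  - refine (Rseries_eq _ _ _ _ _ _
      (Rseries_plus _ _ _ _ (Rseries_scal (fst w) _ _ H1) (Rseries_scal (- snd w) _ _ H2)));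
      [intros n|]; simpl; ring.
  - refine (Rseries_eq _ _ _ _ _ _
      (Rseries_plus _ _ _ _ (Rseries_scal (fst w) _ _ H2) (Rseries_scal (snd w) _ _ H1)));
      [intros n|]; simpl; ring.
Qed.

Lemma Cseries_opp a s : Cseries_sum a s -> Cseries_sum (fun n => Copp (a n)) (Copp s).
Proof.
  intros [H1 H2]. split;
    [refine (Rseries_eq _ _ _ _ _ _ (Rseries_scal (-1) _ _ H1))
    |refine (Rseries_eq _ _ _ _ _ _ (Rseries_scal (-1) _ _ H2))];
    [intros n| |intros n|]; simpl; ring.
Qed.

Definition Cshift (a : nat -> Cplx) (n : nat) : Cplx :=
  match n with O => (0, 0) | S m => a m end.

Lemma Cseries_shift a s : Cseries_sum a s -> Cseries_sum (Cshift a) s.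
Proof.
  intros [H1 H2]. split;
    [refine (Rseries_eq _ _ _ _ _ _ (Rseries_shift _ _ H1))
    |refine (Rseries_eq _ _ _ _ _ _ (Rseries_shift _ _ H2))];
    solve [intros [|n]; reflexivity | reflexivity].
Qed.

Definition Chead (x : Cplx) (n : nat) : Cplx :=
  match n with O => x | S _ => (0, 0) end.

Lemma Cseries_head x : Cseries_sum (Chead x) x.
Proof.
  split;
    [refine (Rseries_eq _ _ _ _ _ _ (Rseries_head (fst x)))
    |refine (Rseries_eq _ _ _ _ _ _ (Rseries_head (snd x)))];
    solve [intros [|n]; reflexivity | reflexivity].
Qed.

(** Coefficients of [-(z^2 - s z + p) G(z) - v z + w] when [G] has coefficients [c]. *)
Definition rhs_coef (s p v w : R) (c : nat -> R) (n : nat) : R :=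
  match n with
  | O => w - p * c O
  | S O => s * c O - p * c 1%nat - v
  | S (S m as k) => - c m + s * c k - p * c n
  end.

(** The terms [c n z^n] of the power series with real coefficients [c] at [z];
    [gterm pi0 pia pib] is [pterm (gcoef pi0 pia pib)] by definition. *)
Definition pterm (c : nat -> R) (z : Cplx) (n : nat) : Cplx := Cmul (RtoC (c n)) (Cpow z n).

Ltac Cring := unfold Cmul, Cadd, Copp, Csub, RtoC; simpl; f_equal; ring.

Lemma rhs_series c z G z1 z2 v w :
  Cseries_sum (pterm c z) G ->
  Cseries_sum (pterm (rhs_coef (z1 + z2) (z1 * z2) v w c) z)
    (Cadd (Csub (Copp (Cmul (Cmul (Csub z (RtoC z1)) (Csub z (RtoC z2))) G))
                (Cmul (RtoC v) z))
          (RtoC w)).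
Proof.
  intros HG.
  set (S1 := Cshift (fun n => Cmul z (pterm c z n))).
  set (S2 := Cshift (fun n => Cmul z (S1 n))).
  assert (HS1 : Cseries_sum S1 (Cmul z G)) by (apply Cseries_shift, Cseries_mul, HG).
  assert (HS2 : Cseries_sum S2 (Cmul z (Cmul z G))) by (apply Cseries_shift, Cseries_mul, HS1).
  pose proof (Cseries_add _ _ _ _
    (Cseries_add _ _ _ _
      (Cseries_add _ _ _ _
        (Cseries_add _ _ _ _ (Cseries_opp _ _ HS2) (Cseries_mul (RtoC (z1 + z2)) _ _ HS1))
        (Cseries_opp _ _ (Cseries_mul (RtoC (z1 * z2)) _ _ HG)))
      (Cseries_opp _ _ (Cseries_shift _ _ (Cseries_head (Cmul (RtoC v) z)))))
    (Cseries_head (RtoC w))) as HT.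
  replace (Cadd (Csub (Copp (Cmul (Cmul (Csub z (RtoC z1)) (Csub z (RtoC z2))) G))
                (Cmul (RtoC v) z)) (RtoC w)) with
    (Cadd (Cadd (Cadd (Cadd (Copp (Cmul z (Cmul z G))) (Cmul (RtoC (z1 + z2)) (Cmul z G)))
      (Copp (Cmul (RtoC (z1 * z2)) G))) (Copp (Cmul (RtoC v) z))) (RtoC w))
    by (destruct z, G; Cring).
  revert HT. apply Cseries_ext. intros n.
  unfold S2, S1, pterm, rhs_coef.
  destruct n as [|[|m]]; simpl; destruct z; Cring.
Qed.

(** Squared modulus; it is multiplicative, so [|z| <= 1] propagates to all powers. *)
Definition Cnorm2 (w : Cplx) : R := fst w ^ 2 + snd w ^ 2.

Lemma Cnorm2_mul a b : Cnorm2 (Cmul a b) = Cnorm2 a * Cnorm2 b.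
Proof. unfold Cnorm2, Cmul; simpl; ring. Qed.

Lemma Cnorm2_nonneg a : 0 <= Cnorm2 a.
Proof. unfold Cnorm2. pose proof (pow2_ge_0 (fst a)). pose proof (pow2_ge_0 (snd a)). lra. Qed.

Lemma Cnorm2_Cmod w : Cmod w <= 1 -> Cnorm2 w <= 1.
Proof.
  unfold Cmod. intros H. pose proof (Cnorm2_nonneg w) as H0. unfold Cnorm2 in *.
  pose proof (sqrt_sqrt _ H0). pose proof (sqrt_pos (fst w ^ 2 + snd w ^ 2)). nra.
Qed.

Lemma Cnorm2_pow w n : Cnorm2 w <= 1 -> Cnorm2 (Cpow w n) <= 1.
Proof.
  intros H. induction n as [|n IH]; [unfold Cnorm2; simpl; lra|].
  simpl Cpow. rewrite Cnorm2_mul.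
  pose proof (Cnorm2_nonneg w). pose proof (Cnorm2_nonneg (Cpow w n)). nra.
Qed.

Lemma Cnorm2_components w : Cnorm2 w <= 1 -> Rabs (fst w) <= 1 /\ Rabs (snd w) <= 1.
Proof.
  unfold Cnorm2. intros H. pose proof (pow2_ge_0 (fst w)). pose proof (pow2_ge_0 (snd w)).
  split; apply Rabs_le; split; nra.
Qed.

Lemma summable_bounded_mul c l f : (forall n, 0 <= c n) -> infinite_sum c l ->
  (forall n, Rabs (f n) <= 1) -> exists s, infinite_sum (fun n => c n * f n) s.
Proof.
  intros Hc Hl Hf. apply is_series_Reals in Hl.
  assert (He : ex_series (fun n => c n * f n)).
  { apply (@ex_series_le R_AbsRing R_CompleteNormedModule _ c); [|exists l; exact Hl].
    intros n. change (Rabs (c n * f n) <= c n).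
    rewrite Rabs_mult, (Rabs_pos_eq _ (Hc n)).
    pose proof (Hc n). specialize (Hf n). pose proof (Rabs_pos (f n)). nra. }
  exists (Series (fun n => c n * f n)). apply is_series_Reals, Series_correct, He.
Qed.

Lemma pseries_converges c l z : (forall n, 0 <= c n) -> infinite_sum c l ->
  Cnorm2 z <= 1 -> exists G, Cseries_sum (pterm c z) G.
Proof.
  intros Hc Hl Hz.
  assert (Hb : forall n, Rabs (fst (Cpow z n)) <= 1 /\ Rabs (snd (Cpow z n)) <= 1)
    by (intros n; apply Cnorm2_components, Cnorm2_pow, Hz).
  destruct (summable_bounded_mul c l (fun n => fst (Cpow z n)) Hc Hl) as [s1 H1];
    [intros n; apply Hb|].
  destruct (summable_bounded_mul c l (fun n => snd (Cpow z n)) Hc Hl) as [s2 H2];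
    [intros n; apply Hb|].
  exists (s1, s2). split;
    [revert H1 | revert H2]; apply Rseries_eq; try reflexivity;
    intros n; unfold pterm, Cmul, RtoC; simpl; ring.
Qed.

Lemma Cpow_scal r z n : Cpow (Cmul (RtoC r) z) n = Cmul (RtoC (r ^ n)) (Cpow z n).
Proof.
  induction n as [|n IH]; simpl Cpow; [Cring|].
  rewrite IH. destruct (Cpow z n), z. Cring.
Qed.

Lemma pterm_scaled k c r z n :
  Cmul (RtoC k) (pterm c (Cmul (RtoC r) z) n) = pterm (fun m => k * (c m * r ^ m)) z n.
Proof. unfold pterm. rewrite Cpow_scal. destruct (Cpow z n). Cring. Qed.

Lemma vieta_sum a b q : a <> 0 -> (b + q) / (2 * a) + (b - q) / (2 * a) = b / a.
Proof. intros Ha. field. exact Ha. Qed.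

Lemma vieta_prod a b D : a <> 0 -> 0 <= D ->
  (b + sqrt D) / (2 * a) * ((b - sqrt D) / (2 * a)) = (b ^ 2 - D) / (4 * a ^ 2).
Proof.
  intros Ha HD.
  replace (b ^ 2 - D) with ((b + sqrt D) * (b - sqrt D)) by
    (rewrite <- (sqrt_sqrt D HD) at 3; ring).
  field. exact Ha.
Qed.

Lemma Delta_nonneg la lb gamma mua mub : 0 <= la + lb -> 0 <= gamma ->
  0 <= Defs.Delta la lb gamma mua mub.
Proof. intros HL Hg. unfold Defs.Delta. pose proof (pow2_ge_0 (la + lb - gamma + mua - mub)). nra. Qed.

Lemma zplus_zminus_sum la lb gamma mua mub : la + lb <> 0 ->
  zplus la lb gamma mua mub + zminus la lb gamma mua mub
  = (mua + mub + (la + lb) + gamma) / (la + lb).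
Proof. intros HL. apply vieta_sum. exact HL. Qed.

Lemma zplus_zminus_prod la lb gamma mua mub : 0 < la + lb -> 0 <= gamma ->
  zplus la lb gamma mua mub * zminus la lb gamma mua mub
  = ((la + lb) * mub + mua * mub + gamma * mua) / (la + lb) ^ 2.
Proof.
  intros HL Hg. unfold zplus, zminus.
  rewrite vieta_prod by (lra || apply Delta_nonneg; lra).
  unfold Defs.Delta. field. lra.
Qed.

Section Coefficients.

Variables la lb delta gamma mua mub pi0 : R.
Variables pia pib : nat -> R.
Hypothesis Hlam : 0 < la + lb.
Hypothesis Hgamma : 0 <= gamma.
Hypothesis Hbal : balance la lb delta gamma mua mub pi0 pia pib.

Notation c := (gcoef pi0 pia pib).
Notation r := (rr la lb delta).

(** Flow balance across the cut between levels [n] and [n+1]: the sum of the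
    balance equations of all states of levels [<= n]. *)
Lemma cut_equation n : (la + lb) * c n = mua * pia (S n) + mub * pib (S n).
Proof.
  destruct Hbal as [bal0 [bala balb]].
  induction n as [|n IH]; [simpl; lra|].
  pose proof (bala (S n) ltac:(lia)) as Ea.
  pose proof (balb (S n) ltac:(lia)) as Eb.
  destruct n as [|m]; simpl in Ea, Eb, IH |- *; lra.
Qed.

Lemma level_a_part n : (mua - mub) * pia (S n) = (la + lb) * c n - mub * c (S n).
Proof. rewrite cut_equation; simpl; ring. Qed.

(** Balance of state [(n+1, a)], multiplied by [mua - mub] and with [pi^a_{n+1}]
    eliminated; the last term is the arrival flow from level [n]. *)
Lemma scaled_a_balance n :
  (mua - mub) * (la * r ^ S n * c (S n)) =
    (la + lb) * (la + lb + mua + gamma) * c n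
    - ((la + lb) * mub + mua * mub + gamma * mua) * c (S n)
    - (mua - mub) * (if Nat.eqb n 0 then la * pi0 else (la + lb) * pia n).
Proof.
  destruct Hbal as [_ [bala _]].
  pose proof (bala (S n) ltac:(lia)) as Ea.
  rewrite <- cut_equation in Ea.
  replace (pp la lb delta (S n) * ((la + lb) * c (S n))) with (la * r ^ S n * c (S n))
    in Ea by (unfold pp; field; lra).
  replace (Nat.eqb (S n) 1) with (Nat.eqb n 0) in Ea by (destruct n; reflexivity).
  replace (S n - 1)%nat with n in Ea by lia.
  pose proof (level_a_part n) as Ha.
  simpl gcoef in *.
  assert (Ea' := f_equal (Rmult (mua - mub)) Ea).
  assert (Ha' := f_equal (Rmult (la + lb + mua + gamma)) Ha).
  lra.
Qed.

Lemma balance_coef n :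
  uu la lb mua mub * (c n * r ^ n) =
  rhs_coef (zplus la lb gamma mua mub + zminus la lb gamma mua mub)
           (zplus la lb gamma mua mub * zminus la lb gamma mua mub)
           (vv la lb mua mub pi0) (ww la lb gamma mua mub pi0) c n.
Proof.
  rewrite zplus_zminus_sum, zplus_zminus_prod by lra.
  unfold uu, vv, ww.
  destruct n as [|n]; [simpl; field; lra|].
  replace (la * (mua - mub) / (la + lb) ^ 2 * (c (S n) * r ^ S n))
    with ((mua - mub) * (la * r ^ S n * c (S n)) / (la + lb) ^ 2) by (field; lra).
  rewrite scaled_a_balance.
  destruct n as [|m]; simpl Nat.eqb; cbv iota.
  - simpl; field; lra.
  - replace ((mua - mub) * ((la + lb) * pia (S m)))
      with ((la + lb) * ((mua - mub) * pia (S m))) by ring.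
    rewrite level_a_part. simpl; field; lra.
Qed.

End Coefficients.

Lemma stationary_coefs pi0 pia pib : is_prob pi0 pia pib ->
  (forall n, 0 <= gcoef pi0 pia pib n) /\ infinite_sum (gcoef pi0 pia pib) 1.
Proof.
  intros [H0 [Hn Hs]]. split.
  - intros [|n]; simpl; [exact H0|]. destruct (Hn (S n) ltac:(lia)). lra.
  - revert Hs. apply Rseries_eq; [intros [|n]|]; reflexivity.
Qed.

Lemma rr_bounds la lb delta : 0 < la + lb -> 0 < delta -> 0 <= rr la lb delta <= 1.
Proof.
  intros HL Hd. unfold rr. split.
  - apply Rlt_le, Rdiv_lt_0_compat; lra.
  - apply Rmult_le_reg_r with (la + lb + delta); [lra|].
    unfold Rdiv. rewrite Rmult_assoc, Rinv_l by lra. lra.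
Qed.

Theorem proposition2 (la lb delta gamma mua mub : R)
  (Hla : 0 < la) (Hlb : 0 < lb) (Hdelta : 0 < delta) (Hgamma : 0 <= gamma)
  (Hmua : 0 < mua) (Hmub : 0 < mub)
  (pi0 : R) (pia pib : nat -> R)
  (Hstat : stationary la lb delta gamma mua mub pi0 pia pib)
  (z : Cplx) (Hz : Cmod z <= 1) :
  exists gz grz : Cplx,
    Cseries_sum (gterm pi0 pia pib z) gz /\
    Cseries_sum (gterm pi0 pia pib (Cmul (RtoC (rr la lb delta)) z)) grz /\
    Cmul (RtoC (uu la lb mua mub)) grz =
      Cadd (Csub (Copp (Cmul (Cmul (Csub z (RtoC (zplus la lb gamma mua mub)))
                                  (Csub z (RtoC (zminus la lb gamma mua mub)))) gz))
                 (Cmul (RtoC (vv la lb mua mub pi0)) z))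
           (RtoC (ww la lb gamma mua mub pi0)).
Proof.
  destruct Hstat as [Hprob Hbal].
  assert (Hlam : 0 < la + lb) by lra.
  destruct (stationary_coefs _ _ _ Hprob) as [Hpos Hsum].
  destruct (rr_bounds _ _ _ Hlam Hdelta) as [Hr0 Hr1].
  assert (Hz2 : Cnorm2 z <= 1) by (apply Cnorm2_Cmod, Hz).
  assert (Hrz : Cnorm2 (Cmul (RtoC (rr la lb delta)) z) <= 1).
  { rewrite Cnorm2_mul. pose proof (Cnorm2_nonneg z). unfold Cnorm2 at 1; simpl. nra. }
  destruct (pseries_converges _ _ _ Hpos Hsum Hz2) as [G HG].
  destruct (pseries_converges _ _ _ Hpos Hsum Hrz) as [Gr HH].
  exists G, Gr. split; [exact HG|]. split; [exact HH|].
  (* Both sides are sums of the same power series at [z], coefficientwise by [balance_coef]. *)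
  apply (Cseries_unique (pterm (rhs_coef (zplus la lb gamma mua mub + zminus la lb gamma mua mub)
     (zplus la lb gamma mua mub * zminus la lb gamma mua mub)
     (vv la lb mua mub pi0) (ww la lb gamma mua mub pi0) (gcoef pi0 pia pib)) z)).
  - pose proof (Cseries_mul (RtoC (uu la lb mua mub)) _ _ HH) as HU.
    apply (Cseries_ext _ _ _ (pterm_scaled _ _ _ _)) in HU.
    revert HU. apply Cseries_ext. intros n. unfold pterm.
    rewrite (balance_coef la lb delta gamma mua mub pi0 pia pib Hlam Hgamma Hbal).
    reflexivity.
  - apply rhs_series, HG.
Qed.
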